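(* Let $n\ge3$ and let $\mathcal{G}$ be the directed star graph on nodes $\{1,\dots,n\}$ with center $1$, whose edges are $(1,j)$ and $(j,1)$ for $j=2,\dots,n$ together with self-loops $(i,i)$ at every node. Let $\tau\in\mathbb{Z}$ with $2\le\tau\le 2n-3$. Then the matrix $P^*$ with $P^*(1,1)=0$, $P^*(1,j)=\frac1{n-1}$ for $j\ge2$, and $P^*(j,1)=1$, $P^*(j,l)=0$ for $j\ge2$, $l\ne1$, is an optimal solution of $\max_P\min_{i,j}\mathbb{P}(T_{ij}(P)\le\tau)$ over all Markov chain strategies $P$ conforming to $\mathcal{G}$, and the value of the game is $$\mathbb{V}=\begin{cases}1-\left(1-\frac1{n-1}\right)^{\frac{\tau-1}{2}}, & \tau \text{ odd},\\[2pt] 1-\left(1-\frac1{n-1}\right)^{\frac{\tau}{2}}, & \tau\text{ even}.\end{cases}$$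
   Context: A Markov chain strategy conforming to $\mathcal{G}=(V,\mathcal{E})$ is a row-stochastic nonnegative $P=(p_{ij})$ with $p_{ij}=0$ for $(i,j)\notin\mathcal{E}$. For the Markov chain $(X_k)$ with transition matrix $P$, $T_{ij}=\min\{k\ge1:X_k=j\}$ given $X_0=i$. The value of the game is $\mathbb{V}=\max_P\min_{i,j}\mathbb{P}(T_{ij}(P)\le\tau)$. *)

From HB Require Import structures.
From mathcomp Require Import all_boot all_order all_algebra.
From mathcomp Require Import reals.
Set Implicit Arguments. Unset Strict Implicit. Unset Printing Implicit Defensive.
Import Order.TTheory GRing.Theory Num.Theory.
Local Open Scope ring_scope.

(* Directed star graph on nodes 'I_n (node with value 0 = paper's node 1 is
   the centre): edges (c,j), (j,c), plus self-loops. *)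
Definition star_edge (n : nat) (i j : 'I_n) : bool :=
  (i == j) || (val i == 0%N) || (val j == 0%N).

Definition mc_strategy (R : numDomainType) (n : nat) (E : rel 'I_n)
  (P : 'M[R]_n) : Prop :=
  [/\ forall i j, 0 <= P i j,
      forall i, \sum_(j < n) P i j = 1
    & forall i j, ~~ E i j -> P i j = 0].

(* P(T_ij <= tau) for the chain with transition matrix P started at X_0 = i,
   T_ij = min {k >= 1 : X_k = j}: sum over k = 1..tau of the probability of the
   trajectories (X_0,...,X_k) with X_0 = i, X_k = j, X_m <> j for 0 < m < k,
   each trajectory having probability prod_{m<k} P(X_m, X_{m+1}). *)
Definition hit_le (R : numDomainType) (n : nat) (P : 'M[R]_n) (tau : nat)
  (i j : 'I_n) : R :=
  \sum_(1 <= k < tau.+1)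
    \sum_(x : {ffun 'I_k.+1 -> 'I_n} |
            [&& x ord0 == i, x ord_max == j &
                [forall m : 'I_k.+1, ((0 < m)%N && (m < k)%N) ==> (x m != j)]])
      \prod_(m < k) P (x (inord m)) (x (inord m.+1)).

Definition Pstar (R : numFieldType) (n : nat) : 'M[R]_n :=
  \matrix_(i, j)
    if val i == 0%N then (if val j == 0%N then 0 else (n.-1%:R)^-1)
    else (if val j == 0%N then 1 else 0).

From HB Require Import structures.
From mathcomp Require Import all_boot all_order all_algebra.
From mathcomp Require Import reals.
From mathcomp Require Import ring lra.
Set Implicit Arguments. Unset Strict Implicit. Unset Printing Implicit Defensive.
Import Order.TTheory GRing.Theory Num.Theory.
Local Open Scope ring_scope.

(* First-step analysis gives P(T_ij <= t+1) = P(i,j) + sum_(l <> j) P(i,l) P(T_lj <= t).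
   On the star a walk can only enter a leaf j from the centre, which it leaves
   at most ceil(t/2) times within t steps from the centre and floor(t/2) times
   from another leaf.  Pick the leaf j receiving the least of the mass
   1 - P(c,c) that leaves the centre, so P(c,j) <= (1 - P(c,c))/(n-1); each
   departure from the centre then hits j with probability at most 1/(n-1),
   and induction on t bounds P(T_lj <= t) by the geometric value
   1 - (1 - 1/(n-1))^floor(t/2) from a leaf l <> j.  P^* never idles at the
   centre and spreads uniformly over the leaves, so it attains these values,
   while it reaches the centre surely within two steps. *)

Section FfunCons.
Variable T : Type.

Definition ffun_cons k (a : T) (y : {ffun 'I_k.+1 -> T}) : {ffun 'I_k.+2 -> T} :=
  [ffun m => if unlift ord0 m is Some m' then y m' else a].

Lemma ffun_cons0 k a y : @ffun_cons k a y ord0 = a.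
Proof. by rewrite ffunE unlift_none. Qed.

Lemma ffun_consS k a y m : @ffun_cons k a y (lift ord0 m) = y m.
Proof. by rewrite ffunE liftK. Qed.

Lemma ffun_cons_bij k :
  bijective (fun p : T * {ffun 'I_k.+1 -> T} => ffun_cons p.1 p.2).
Proof.
exists (fun x : {ffun 'I_k.+2 -> T} => (x ord0, [ffun m => x (lift ord0 m)])).
  case=> a y /=; rewrite ffun_cons0; congr pair.
  by apply/ffunP => m; rewrite ffunE ffun_consS.
move=> x; apply/ffunP => m; rewrite ffunE.
by case: unliftP => [m' ->|->] //; rewrite ffunE.
Qed.

End FfunCons.

Definition avoids_interior (T : eqType) k (j : T) (x : {ffun 'I_k.+1 -> T}) :=
  [forall m : 'I_k.+1, ((0 < m)%N && (m < k)%N) ==> (x m != j)].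

Lemma avoids_interior_cons (T : eqType) k (a j : T) (y : {ffun 'I_k.+1 -> T}) :
  avoids_interior j (ffun_cons a y) =
  ((k == 0)%N || (y ord0 != j)) && avoids_interior j y.
Proof.
apply/forallP/andP => [avoid_ay|[y0j /forallP avoid_y] m].
  split; last first.
    apply/forallP => m; apply/implyP => /andP[_ mk].
    by have := avoid_ay (lift ord0 m); rewrite ffun_consS /= /bump /= ltnS mk.
  case: k y avoid_ay => // k y avoid_ay; apply/orP; right.
  by have := avoid_ay (lift ord0 ord0); rewrite ffun_consS.
apply/implyP; case: (unliftP ord0 m) => [m' ->|->] //=.
rewrite ffun_consS /bump /= add1n ltnS => m'k.
case: (posnP m') => [m'0|m'p].
  have -> : m' = ord0 by apply: val_inj.
  by case/orP: y0j => [/eqP k0|//]; rewrite m'0 k0 in m'k.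
by have /implyP := avoid_y m'; apply; rewrite m'p.
Qed.

Section FirstHitting.
Variables (R : numDomainType) (n : nat) (P : 'M[R]_n).

Definition path_weight k (x : {ffun 'I_k.+1 -> 'I_n}) : R :=
  \prod_(m < k) P (x (inord m)) (x (inord m.+1)).

Definition first_hit k i j : R :=
  \sum_(x : {ffun 'I_k.+1 -> 'I_n} |
          [&& x ord0 == i, x ord_max == j & avoids_interior j x])
    path_weight x.

Lemma hit_leE tau i j : hit_le P tau i j = \sum_(1 <= k < tau.+1) first_hit k i j.
Proof. by []. Qed.

Lemma path_weight_cons k a (y : {ffun 'I_k.+1 -> 'I_n}) :
  path_weight (ffun_cons a y) = P a (y ord0) * path_weight y.
Proof.
have inordS m : (m < k.+1)%N -> inord m.+1 = lift ord0 (inord m : 'I_k.+1) :> 'I_k.+2.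
  by move=> mk; apply: val_inj; rewrite /= /bump /= !inordK.
rewrite /path_weight big_ord_recl inordS // !inord_val.
have -> : inord 0 = ord0 :> 'I_k.+2 by apply: val_inj; rewrite /= inordK.
rewrite ffun_cons0 ffun_consS; congr (_ * _); apply: eq_bigr => m _.
have mk : (m < k)%N := ltn_ord m.
by rewrite lift0 !inordS ?ffun_consS // ltnW.
Qed.

Lemma first_hit0 i j : first_hit 0 i j = (i == j)%:R.
Proof.
rewrite /first_hit; have [<-|ne] := eqVneq i j.
  rewrite (big_pred1 [ffun => i]) ?[path_weight _]big_ord0 // => x /=.
  apply/idP/eqP => [/and3P[/eqP x0 _ _]|->]; last first.
    by rewrite !ffunE eqxx; apply/forallP => m; rewrite ltn0 andbF.
  by apply/ffunP => m; rewrite ffunE (ord1 m).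
rewrite big_pred0 // => x; apply: contraNF ne => /and3P[/eqP <- /eqP <- _].
by rewrite (ord1 ord_max).
Qed.

Lemma first_hitS k i j :
  first_hit k.+1 i j = \sum_(l | (k == 0)%N || (l != j)) P i l * first_hit k l j.
Proof.
have max_lift : (ord_max : 'I_k.+2) = lift ord0 ord_max by apply: val_inj.
rewrite /first_hit (reindex _ (onW_bij _ (ffun_cons_bij _ k))) /=.
under eq_bigl => p do rewrite ffun_cons0 max_lift ffun_consS avoids_interior_cons.
under eq_bigr => p _ do rewrite path_weight_cons.
rewrite -(pair_big_dep (pred1 i)
  (fun _ (y : {ffun 'I_k.+1 -> 'I_n}) =>
     [&& y ord_max == j, (k == 0)%N || (y ord0 != j) & avoids_interior j y])
  (fun a y => P a (y ord0) * path_weight y)) big_pred1_eq.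
rewrite (partition_big (fun y : {ffun 'I_k.+1 -> 'I_n} => y ord0)
                       (fun l => (k == 0)%N || (l != j))) /=;
  last by move=> y /and3P[].
apply: eq_bigr => l Cl; rewrite big_distrr.
apply: eq_big => [y|y /andP[_ /eqP <-]] //.
by rewrite andbC; case: eqP => //= ->; rewrite Cl.
Qed.

Lemma hit_le0 i j : hit_le P 0 i j = 0.
Proof. by rewrite hit_leE big_geq. Qed.

Lemma hit_leS t i j :
  hit_le P t.+1 i j = P i j + \sum_(l | l != j) P i l * hit_le P t l j.
Proof.
rewrite hit_leE big_ltn // first_hitS (bigD1 j) //= first_hit0 eqxx mulr1.
rewrite big1 ?addr0 => [|l /negbTE lj]; last by rewrite first_hit0 lj mulr0.
congr (_ + _); rewrite big_add1 /=.
rewrite (eq_big_nat _ _ (F2 := fun k => \sum_(l | l != j) P i l * first_hit k l j));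
  last by case=> // k _; rewrite first_hitS.
rewrite exchange_big /=; apply: eq_bigr => l _.
by rewrite hit_leE big_distrr.
Qed.

Lemma hit_leS_le t i j (B : 'I_n -> R) :
  (forall l, 0 <= P i l) -> (forall l, l != j -> hit_le P t l j <= B l) ->
  hit_le P t.+1 i j <= P i j + \sum_(l | l != j) P i l * B l.
Proof.
move=> Pi_ge0 hitB; rewrite hit_leS lerD2l.
by apply: ler_sum => l lj; apply: ler_wpM2l; [exact: Pi_ge0 | exact: hitB].
Qed.

Lemma hit_leS_delta i k : (forall l, P i l = (l == k)%:R) ->
  forall t j, hit_le P t.+1 i j = if k == j then 1 else hit_le P t k j.
Proof.
move=> Pi t j; rewrite hit_leS; under eq_bigr => l _ do rewrite Pi.
have [<-|kj] := eqVneq k j.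
  by rewrite Pi eqxx big1 ?addr0 // => l /negbTE ->; rewrite mul0r.
rewrite Pi eq_sym (negbTE kj) add0r (bigD1 k) //= eqxx mul1r big1 ?addr0 //.
by move=> l /andP[_ /negbTE ->]; rewrite mul0r.
Qed.

Lemma sum_row_neq i j : \sum_l P i l = 1 -> \sum_(l | l != j) P i l = 1 - P i j.
Proof.
by move=> Pi1; rewrite -Pi1 [in RHS](bigD1 j) //= [P i j + _]addrC addrK.
Qed.

End FirstHitting.

Lemma exists_le_mean (R : realDomainType) (I : finType) (i0 : I) (F : I -> R) :
  exists i, F i *+ #|I| <= \sum_j F j.
Proof.
case: (@arg_minP _ R I i0 xpredT F isT) => i _ Fi_min; exists i.
by rewrite -sumr_const; apply: ler_sum => j _; exact: Fi_min.
Qed.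

Lemma half_if_odd t : (if odd t then t.-1./2 else t./2) = t./2.
Proof. by case: t => //= t; rewrite uphalf_half; case: odd. Qed.

Lemma half_le_uphalf t : (t./2 <= uphalf t)%N.
Proof. by rewrite uphalfE half_leq. Qed.

Section StarGraph.
Variables (R : realFieldType) (n : nat).
Hypothesis n_gt0 : (0 < n)%N.

Local Notation c := (ord0 : 'I_n.+1).
Local Notation w := (n%:R^-1 : R).
Local Notation r := (1 - n%:R^-1 : R).

Definition geom_cdf k : R := 1 - r ^+ k.

(* A walk to a leaf target must leave the centre for it; within [t] steps it
   leaves the centre at most [uphalf t] times when starting there and [t./2]
   times when starting at another leaf. *)
Definition star_value t (l : 'I_n.+1) : R :=
  geom_cdf (if l == c then uphalf t else t./2).

Lemma w_gt0 : 0 < w. Proof. by rewrite invr_gt0 ltr0n. Qed.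

Lemma r_ge0 : 0 <= r. Proof. by rewrite subr_ge0 invf_le1 ?ltr0n // ler1n. Qed.

Lemma geom_cdf0 : geom_cdf 0 = 0. Proof. by rewrite /geom_cdf expr0 subrr. Qed.

Lemma geom_cdfS k : geom_cdf k.+1 = w + r * geom_cdf k.
Proof. by rewrite /geom_cdf exprS; ring. Qed.

Lemma geom_cdf_le1 k : geom_cdf k <= 1.
Proof. by rewrite lerBlDr lerDl exprn_ge0 // r_ge0. Qed.

Lemma geom_cdf_le a b : (a <= b)%N -> geom_cdf a <= geom_cdf b.
Proof.
move=> ab; rewrite lerD2l lerN2 ler_wiXn2l // ?r_ge0 //.
by rewrite lerBlDr lerDl ltW // w_gt0.
Qed.

Lemma star_value_center t : star_value t c = geom_cdf (uphalf t).
Proof. by rewrite /star_value eqxx. Qed.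

Lemma star_value_leaf t l : l != c -> star_value t l = geom_cdf t./2.
Proof. by move=> l0; rewrite /star_value (negbTE l0). Qed.

Lemma star_value0 l : star_value 0 l = 0.
Proof. by rewrite /star_value; case: (_ == _); exact: geom_cdf0. Qed.

Lemma star_value_ge t l : geom_cdf t./2 <= star_value t l.
Proof.
by rewrite /star_value; case: (_ == _) => //; exact/geom_cdf_le/half_le_uphalf.
Qed.

Lemma star_value_le_center t l : star_value t l <= star_value t c.
Proof.
rewrite star_value_center /star_value; case: (_ == _) => //.
exact/geom_cdf_le/half_le_uphalf.
Qed.

Lemma exists_other_leaf j : (1 < n)%N -> exists2 i : 'I_n.+1, i != c & i != j.
Proof.
move=> n_gt1; pose k := (if val j == 1 then 2 else 1)%N.
have kn : (k < n.+1)%N by rewrite /k; case: ifP.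
exists (Ordinal kn); first by rewrite -val_eqE /= /k; case: ifP.
by rewrite -val_eqE /= /k; case: ifP => [/eqP ->|/negbT]; rewrite // eq_sym.
Qed.

Section OptimalStrategy.

Local Notation Ps := (Pstar R n.+1).

Lemma PstarE i j :
  Ps i j = if i == c then (if j == c then 0 else w) else (j == c)%:R.
Proof. by rewrite mxE -!(inj_eq val_inj) /=; case: (_ == _); case: (_ == _). Qed.

Lemma Pstar_center_center : Ps c c = 0.
Proof. by rewrite PstarE eqxx. Qed.

Lemma Pstar_center_leaf j : j != c -> Ps c j = w.
Proof. by move=> j0; rewrite PstarE eqxx (negbTE j0). Qed.

Lemma Pstar_leaf_row l : l != c -> forall l', Ps l l' = (l' == c)%:R.
Proof. by move=> l0 l'; rewrite PstarE (negbTE l0). Qed.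

Lemma Pstar_strategy : mc_strategy (@star_edge n.+1) Ps.
Proof.
split.
- move=> i j; rewrite PstarE; case: ifP => _; last exact: ler0n.
  by case: ifP => _ //; rewrite ltW // w_gt0.
- move=> i; rewrite big_ord_recl PstarE.
  under eq_bigr => l _ do rewrite PstarE.
  case: ifP => _ /=; last by rewrite big1 ?addr0.
  rewrite sumr_const card_ord add0r -[_ *+ n]mulr_natr.
  by rewrite mulVf // pnatr_eq0 -lt0n.
- move=> i j; rewrite /star_edge !negb_or => /andP[/andP[_ i0] j0].
  by rewrite mxE (negbTE i0) (negbTE j0).
Qed.

Lemma Pstar_hit t j l : j != c -> l != j -> hit_le Ps t l j = star_value t l.
Proof.
move=> j0; elim: t l => [|t IH] l lj; first by rewrite hit_le0 star_value0.
have [->|l0] := eqVneq l c; last first.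
  rewrite (hit_leS_delta (Pstar_leaf_row l0)) (ifN_eqC _ _ j0) IH 1?eq_sym //.
  by rewrite star_value_center star_value_leaf.
rewrite hit_leS star_value_center geom_cdfS Pstar_center_leaf //; congr (_ + _).
transitivity (\sum_(l | l != j) Ps c l * geom_cdf t./2).
  apply: eq_bigr => l' l'j; rewrite IH //.
  have [->|l'0] := eqVneq l' c; first by rewrite Pstar_center_center !mul0r.
  by rewrite star_value_leaf.
have [_ Ps1 _] := Pstar_strategy.
by rewrite -big_distrl /= sum_row_neq // Pstar_center_leaf.
Qed.

Lemma Pstar_hit_self t j : j != c -> hit_le Ps t.+1 j j = geom_cdf t.+1./2.
Proof.
move=> j0; rewrite (hit_leS_delta (Pstar_leaf_row j0)) (ifN_eqC _ _ j0).
by rewrite Pstar_hit ?star_value_center // eq_sym.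
Qed.

Lemma Pstar_hit_center t i : hit_le Ps t.+2 i c = 1.
Proof.
have [->|i0] := eqVneq i c.
  2: by rewrite (hit_leS_delta (Pstar_leaf_row i0)) eqxx.
have [_ Ps1 _] := Pstar_strategy.
rewrite hit_leS Pstar_center_center add0r.
have := sum_row_neq c (Ps1 c); rewrite Pstar_center_center subr0 => <-.
apply: eq_bigr => l l0.
by rewrite (hit_leS_delta (Pstar_leaf_row l0)) eqxx mulr1.
Qed.

Lemma Pstar_hit_ge t i j : (1 < t)%N -> geom_cdf t./2 <= hit_le Ps t i j.
Proof.
case: t => [|[|t]] // _.
have [->|j0] := eqVneq j c; first by rewrite Pstar_hit_center geom_cdf_le1.
have [->|ij] := eqVneq i j; first by rewrite Pstar_hit_self.
by rewrite Pstar_hit //; exact: star_value_ge.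
Qed.

End OptimalStrategy.

Section ConformingStrategy.
Variable P : 'M[R]_n.+1.
Hypothesis P_star : mc_strategy (@star_edge n.+1) P.

Lemma star_leaf_leaf_eq0 l j : l != c -> j != c -> l != j -> P l j = 0.
Proof.
case: P_star => _ _ Pedge l0 j0 lj; apply: Pedge.
by rewrite /star_edge !negb_or lj; apply/andP; split; [exact: l0 | exact: j0].
Qed.

Lemma exists_light_leaf : exists2 j, j != c & P c j <= (1 - P c c) / n%:R.
Proof.
case: P_star => _ P1 _.
have [j' le_mean] := exists_le_mean (Ordinal n_gt0) (fun j' => P c (lift c j')).
exists (lift c j'); first by rewrite eq_sym neq_lift.
rewrite card_ord in le_mean.
rewrite ler_pdivlMr ?ltr0n // mulr_natr; apply: le_trans le_mean _.
by have := P1 c; rewrite big_ord_recl; lra.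
Qed.

Lemma star_hit_le j : j != c -> P c j <= (1 - P c c) / n%:R ->
  forall t l, l != j -> hit_le P t l j <= star_value t l.
Proof.
move=> j0 light; have [P_ge0 P1 _] := P_star.
elim=> [|t IH] l lj; first by rewrite hit_le0 star_value0.
apply: le_trans (hit_leS_le (P_ge0 l) IH) _.
have [->|l0] := eqVneq l c; last first.
  rewrite star_leaf_leaf_eq0 // add0r.
  apply: le_trans (_ : \sum_(l' | l' != j) P l l' * star_value t c <= _).
    apply: ler_sum => l' _; apply: ler_wpM2l; first exact: P_ge0.
    exact: star_value_le_center.
  rewrite -big_distrl /= sum_row_neq // star_leaf_leaf_eq0 // subr0 mul1r.
  by rewrite star_value_center star_value_leaf.
have rest : \sum_(l' | (l' != j) && (l' != c)) P c l' = 1 - P c j - P c c.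
  by rewrite -sum_row_neq // [in RHS](bigD1 c) 1?eq_sym //= addrC addrK.
have center_le : geom_cdf (uphalf t) <= geom_cdf (t./2).+1.
  by apply: geom_cdf_le; rewrite uphalfE (half_leq (_ : t.+1 <= t.+2)%N).
rewrite (bigD1 c) 1?eq_sym //=.
rewrite (eq_bigr (fun l' => P c l' * geom_cdf t./2)); last first.
  by move=> l' /andP[_ l'0]; rewrite star_value_leaf.
rewrite -big_distrl /= rest !star_value_center /=.
have X_ge0 : 0 <= r ^+ t./2 by rewrite exprn_ge0 // r_ge0.
have slack_ge0 : 0 <= (1 - P c c) / n%:R - P c j by rewrite subr_ge0.
have := ler_wpM2l (P_ge0 c c) center_le.
(* the gap to the bound is [r ^+ t./2 * slack] *)
have := mulr_ge0 X_ge0 slack_ge0.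
rewrite /geom_cdf exprS; lra.
Qed.

Lemma star_hit_ub tau :
  (1 < n)%N -> exists i j, hit_le P tau i j <= geom_cdf tau./2.
Proof.
move=> n_gt1; have [j j0 light] := exists_light_leaf.
have [i i0 ij] := exists_other_leaf j n_gt1.
by exists i, j; rewrite -(star_value_leaf tau i0); exact: star_hit_le.
Qed.

End ConformingStrategy.

End StarGraph.

Theorem theorem2 (R : realType) (n tau : nat) (hn : (3 <= n)%N)
  (htau : (2 <= tau <= 2 * n - 3)%N) :
  let V : R := 1 - (1 - (n.-1%:R)^-1) ^+ (if odd tau then tau.-1./2 else tau./2) in
  [/\ mc_strategy (@star_edge n) (Pstar R n),
      (* min_{i,j} P(T_ij(P^* ) <= tau) = V *)
      (forall i j : 'I_n, V <= hit_le (Pstar R n) tau i j),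
      (exists i j : 'I_n, hit_le (Pstar R n) tau i j = V)
    & (* every conforming strategy has min_{i,j} P(T_ij(P) <= tau) <= V *)
      forall P : 'M[R]_n, mc_strategy (@star_edge n) P ->
        exists i j : 'I_n, hit_le P tau i j <= V].
Proof.
case: n hn htau => // n; rewrite ltnS => n_gt1 /andP[tau_gt1 _] V.
have n_gt0 : (0 < n)%N := ltnW n_gt1.
rewrite {}/V half_if_odd /=.
split.
- exact: Pstar_strategy.
- by move=> i j; apply: Pstar_hit_ge.
- case: tau tau_gt1 => // t _; pose j := lift ord0 (Ordinal n_gt0).
  by exists j, j; apply: (@Pstar_hit_self R n n_gt0); rewrite eq_sym neq_lift.
- by move=> P hP; apply: star_hit_ub.
Qed.
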